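(* The expected number of C3's in the OSW graph $G_n$ that contain at least one long-range edge of type $w$ (that is, directed 3-cycles $(x,y,z)$, counted up to cyclic rotation, of pairwise distinct vertices whose three consecutive pairs are each of type $s$ or $w$ with at least one of type $w$) is $\mathcal{O}\left(n^2/\log n\right)$.
   Context: For an integer $n\ge1$, the $n$-octahedral graph $G'_n=(V,E')$ is the undirected graph with vertex set $V=\{u\in\mathbb{Z}^3:|u_1|+|u_2|+|u_3|=n\}$ and edge set $E'=\{\{v,w\}\subset V: v\neq w,\ |v_i-w_i|\le 1 \text{ for all } i=1,2,3\}$. For $u,v\in V$, $d_{uv}$ denotes the shortest-path distance in $G'_n$, and $Z_u=\left(\sum_{w\in V\setminus\{u\}} d_{uw}^{-2}\right)^{-1}$. The OSW random graph $G_n=(V,E)$ is the directed graph in which, for every $\{u,v\}\in E'$, both $(u,v),(v,u)\in E$, and in addition each vertex $u\in V$, independently of the others, chooses one vertex $v\in V\setminus\{u\}$ with probability $Z_u d_{uv}^{-2}$ and the long-range edge $(u,v)$ is added; $C_{uv}$ denotes the event that $u$ chooses $v$. For an ordered pair $(x,y)$ of distinct vertices, say $(x,y)$ is of type $s$ if $\{x,y\}\in E'$, and of type $w$ if $d_{xy}\ge2$ and $C_{xy}$ occurs. *)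

From Stdlib Require Import Reals ZArith.
From mathcomp Require Import all_boot.

Set Implicit Arguments.
Unset Strict Implicit.
Unset Printing Implicit Defensive.

(* Points are triples of indices in 'I_(2n+1); index i encodes coordinate i - n. *)
Definition pt (n : nat) := ('I_(2*n+1) * 'I_(2*n+1) * 'I_(2*n+1))%type.

Definition coord (n : nat) (i : 'I_(2*n+1)) : Z := (Z.of_nat i - Z.of_nat n)%Z.

Definition c1 n (p : pt n) : Z := coord p.1.1.
Definition c2 n (p : pt n) : Z := coord p.1.2.
Definition c3 n (p : pt n) : Z := coord p.2.

Definition onOct (n : nat) (p : pt n) : bool :=
  Z.eqb (Z.abs (c1 p) + Z.abs (c2 p) + Z.abs (c3 p))%Z (Z.of_nat n).

(* Vertex set V of G'_n (every u in Z^3 with |u|_1 = n has coords in [-n,n]). *)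
Definition V (n : nat) : finType := {p : pt n | onOct p}.

Definition adj (n : nat) (v w : V n) : bool :=
  [&& v != w,
      Z.leb (Z.abs (c1 (val v) - c1 (val w))) 1,
      Z.leb (Z.abs (c2 (val v) - c2 (val w))) 1 &
      Z.leb (Z.abs (c3 (val v) - c3 (val w))) 1].

Fixpoint ball (n : nat) (u : V n) (k : nat) : {set V n} :=
  match k with
  | 0 => [set u]
  | k'.+1 => ball u k' :|: [set w | [exists v in ball u k', adj v w]]
  end.

(* Shortest-path distance d_uv: least k with v in ball u k
   (G'_n is connected, so this is attained for k < #|V|). *)
Definition dist (n : nat) (u v : V n) : nat :=
  find (fun k => v \in ball u k) (iota 0 #|V n|).

Local Open Scope R_scope.

Definition Zn (n : nat) (u : V n) : R :=
  / (\big[Rplus/0]_(w : V n | w != u) (/ (INR (dist u w))^2)).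

Definition pchoose (n : nat) (u v : V n) : R :=
  if v == u then 0 else Zn u * / (INR (dist u v))^2.

(* A realization of the long-range choices is a function f : V -> V
   (f u = the vertex chosen by u); C_uv is the event f u = v.
   Choices are independent, so the probability of f is the product. *)
Definition probf (n : nat) (f : {ffun V n -> V n}) : R :=
  \big[Rmult/1]_(u : V n) pchoose u (f u).

Definition type_s (n : nat) (x y : V n) : bool := adj x y.
Definition type_w (n : nat) (f : {ffun V n -> V n}) (x y : V n) : bool :=
  leq 2 (dist x y) && (f x == y).

Definition C3w (n : nat) (f : {ffun V n -> V n}) (t : V n * V n * V n) : bool :=
  let: (x, y, z) := t in
  [&& x != y, y != z, z != x,
      type_s x y || type_w f x y,
      type_s y z || type_w f y z,
      type_s z x || type_w f z x &
      [|| type_w f x y, type_w f y z | type_w f z x]].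

(* number of such C3's counted up to cyclic rotation: each rotation class of a
   triple of pairwise distinct vertices has exactly 3 members *)
Definition numC3w (n : nat) (f : {ffun V n -> V n}) : R :=
  INR #|[set t | C3w f t]| / 3.

Definition expC3w (n : nat) : R :=
  \big[Rplus/0]_(f : {ffun V n -> V n}) (probf f * numC3w f).

(* A C3 with a long-range edge is, up to rotation, a triple (x, y, z) in which x
   chooses y while each of y -> z and z -> x is an edge of G'_n or a long-range
   choice.  The choices are independent, so this has probability at most
   p(x,y) (a(y,z) + p(y,z)) (a(z,x) + p(z,x)), with a the adjacency indicator and
   p(u,v) = Z_u d_uv^-2.  Bounding one factor p by max_u Z_u and summing along the
   path, using that every vertex has at most 27 neighbours and that each p(u, .)
   sums to 1, gives O(|V| max_u Z_u).  Finally |V| = O(n^2) and Z_u = O(1 / log n):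
   some coordinate of u has absolute value m >= n/3, and moving it towards 0 while
   moving the other two away from 0 yields r + 2 vertices within distance r + 1
   of u for every r < m, so sum_w d_uw^-2 >= H_m >= log (m + 1). *)

From Pilot Require Import Defs.
From Stdlib Require Import Reals ZArith Lia.
From mathcomp Require Import all_boot all_order all_algebra.
From mathcomp Require Import Rstruct.
From mathcomp Require Import ring lra zify.

Set Implicit Arguments.
Unset Strict Implicit.
Unset Printing Implicit Defensive.

Import Order.TTheory GRing.Theory Num.Theory.

Local Open Scope ring_scope.

Lemma sum_chain_le (R' : numDomainType) (T : finType) (M N : T -> T -> R') (cM cN : R') :
  (forall x y, 0 <= M x y) -> (forall x, \sum_y M x y <= cM) ->
  (forall y z, 0 <= N y z) -> (forall y, \sum_z N y z <= cN) -> 0 <= cN ->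
  \sum_x \sum_y \sum_z M x y * N y z <= cM * cN * #|T|%:R.
Proof.
move=> M_ge0 sumM N_ge0 sumN cN_ge0.
have row x : \sum_y \sum_z M x y * N y z <= cM * cN.
  under eq_bigr do rewrite -mulr_sumr.
  apply: le_trans (_ : \sum_y M x y * cN <= _); last by rewrite -mulr_suml ler_wpM2r.
  by apply: ler_sum => y _; rewrite ler_wpM2l.
by apply: le_trans (ler_sum _ (fun x _ => row x)) _; rewrite sumr_const mulr_natr.
Qed.

Lemma prodD3 (R' : comPzRingType) (T : finType) (F : T -> R') (x y z : T) :
  x != y -> y != z -> z != x ->
  \prod_u F u = F x * (F y * (F z * \prod_(u | [&& u != x, u != y & u != z]) F u)).
Proof.
move=> xy yz zx; rewrite (bigD1 x) // (bigD1 y) /= 1?eq_sym // (bigD1 z) /= 1?zx 1?eq_sym //.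
by do 3 congr (_ * _); apply: eq_bigl => u; rewrite andbA andbC andbA.
Qed.

Lemma sum_inj_le (R' : numDomainType) (I T : finType) (g : T -> R') (phi : I -> T)
    (D : {pred I}) (P : pred T) :
  {in D &, injective phi} -> (forall i, i \in D -> P (phi i)) -> (forall t, 0 <= g t) ->
  \sum_(i in D) g (phi i) <= \sum_(t | P t) g t.
Proof.
move=> phi_inj phiP g_ge0; rewrite -(big_imset g phi_inj) [leRHS]big_mkcond [leLHS]big_mkcond /=.
apply: ler_sum => t _; case: (boolP (t \in phi @: D)) => [/imsetP [i /phiP Pt ->]|_].
  by rewrite Pt.
by case: ifP.
Qed.

Lemma invn_le_sqr_muln (R' : numFieldType) (r : nat) :
  (r.+1%:R)^-1 <= (r.+1%:R ^+ 2)^-1 *+ r.+2 :> R'.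
Proof.
have -> : (r.+1%:R)^-1 = (r.+1%:R ^+ 2)^-1 * r.+1%:R :> R'.
  by rewrite expr2 invfM -mulrA mulVf ?mulr1 // pnatr_eq0.
by rewrite -[_ *+ r.+2]mulr_natr ler_wpM2l ?invr_ge0 ?exprn_ge0 ?ler_nat.
Qed.

Lemma ler_ln (x y : R) : 0 < x -> x <= y -> ln x <= ln y.
Proof.
move=> x_gt0; rewrite le_eqVlt => /predU1P [-> //|xy].
by apply/RleP/Rlt_le/ln_increasing; apply/RltP.
Qed.

Lemma ln_le_harmonic (m : nat) : ln m.+1%:R <= \sum_(r < m) (r.+1%:R)^-1.
Proof.
elim: m => [|m IH]; first by rewrite big_ord0 ln_1.
rewrite big_ord_recr /=; set x : R := m.+1%:R.
have x_gt0 : 0 < x by rewrite ltr0n.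
have ln1D_le (y : R) : 0 <= y -> ln (1 + y) <= y.
  move=> y_ge0; rewrite -[leRHS]ln_exp; apply: ler_ln; first by rewrite RplusE R1E; lra.
  exact/RleP/exp_ineq1_le.
have -> : m.+2%:R = x * (1 + x^-1) by rewrite mulrDr mulr1 divff ?gt_eqF // -natr1.
rewrite -RmultE ln_mult; [|exact/RltP|by apply/RltP; rewrite addr_gt0 ?invr_gt0].
by rewrite RplusE lerD // -(RplusE 1) ln1D_le // invr_ge0 ltW.
Qed.

Lemma ln_natM (a b : nat) : (0 < a)%N -> (0 < b)%N -> ln (a * b)%:R = ln a%:R + ln b%:R.
Proof. by move=> a_gt0 b_gt0; rewrite natrM -RmultE ln_mult //; apply/RltP; rewrite ltr0n. Qed.

Lemma ler_ln_nat (a b : nat) : (0 < a)%N -> (a <= b)%N -> ln a%:R <= ln b%:R.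
Proof. by move=> a_gt0 ab; apply: ler_ln; rewrite ?ltr0n ?ler_nat. Qed.

Lemma ln_nat_gt0 (a : nat) : (1 < a)%N -> 0 < ln a%:R.
Proof.
move=> a_gt1; have : Rlt (ln 1) (ln a%:R) by apply: ln_increasing; apply/RltP; rewrite ?ltr1n.
by rewrite ln_1 => /RltP.
Qed.

Local Open Scope Z_scope.

Notation Z3 := (Z * Z * Z)%type.

Definition norm1 (T : Z3) : Z := Z.abs T.1.1 + Z.abs T.1.2 + Z.abs T.2.

Definition closeb (T T' : Z3) : bool :=
  [&& Z.abs (T.1.1 - T'.1.1) <=? 1, Z.abs (T.1.2 - T'.1.2) <=? 1 &
      Z.abs (T.2 - T'.2) <=? 1].

Definition rotZ3 (T : Z3) : Z3 := (T.1.2, T.2, T.1.1).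

Lemma norm1_rotZ3 k T : norm1 (iter k rotZ3 T) = norm1 T.
Proof.
elim: k T => [//|k IH] T; rewrite iterSr IH.
by case: T => [[a b] c]; rewrite /norm1 /=; lia.
Qed.

Lemma closeb_rotZ3 k T T' : closeb (iter k rotZ3 T) (iter k rotZ3 T') = closeb T T'.
Proof.
elim: k T T' => [//|k IH] T T'; rewrite !iterSr IH.
case: T => [[a b] c]; case: T' => [[a' b'] c']; rewrite /closeb /=.
by case: (Z.abs (a - a') <=? 1); case: (Z.abs (b - b') <=? 1); case: (Z.abs (c - c') <=? 1).
Qed.

Lemma rotZ3_inj k : injective (iter k rotZ3).
Proof.
elim: k => [//|k IH] T T'; rewrite !iterSr => /IH.
by case: T => [[a b] c]; case: T' => [[a' b'] c'] [-> -> ->].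
Qed.

Lemma rotZ3K k T : (k <= 3)%N -> iter (3 - k) rotZ3 (iter k rotZ3 T) = T.
Proof. by move=> hk; rewrite -iterD subnK //; case: T => [[a b] c]. Qed.

(* Unlike [Z.sgn], this is [1] at [0]: a zero coordinate must also move away from [0]. *)
Definition zsign (x : Z) : Z := if 0 <=? x then 1 else -1.

Lemma zsign_cases x : (0 <= x /\ zsign x = 1) \/ (x < 0 /\ zsign x = -1).
Proof. by rewrite /zsign; case: (Z.leb_spec 0 x) => h; [left|right]. Qed.

(* [descent T j s] is reached from [T] in [j] steps: each step moves the first
   coordinate one unit towards [0], and moves the second (during the first [s]
   steps) or the third coordinate one unit away from [0].  While [j <= |T.1.1|]
   this stays on the sphere of [norm1]. *)
Definition descent (T : Z3) (j s : nat) : Z3 :=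
  (T.1.1 - zsign T.1.1 * Z.of_nat j,
   T.1.2 + zsign T.1.2 * Z.of_nat (minn j s),
   T.2 + zsign T.2 * Z.of_nat (j - minn j s)).

Ltac case_zsign a :=
  let h := fresh in let e := fresh in
  case: (zsign_cases a) => -[h e]; rewrite ?e.

Lemma descent0 T s : descent T 0 s = T.
Proof. by case: T => [[a b] c]; rewrite /descent /= min0n; congr (_, _, _); lia. Qed.

Lemma norm1_descent T j s :
  Z.of_nat j <= Z.abs T.1.1 -> norm1 (descent T j s) = norm1 T.
Proof.
case: T => [[a b] c] /= h; rewrite /norm1 /=.
by case_zsign a; case_zsign b; case_zsign c; lia.
Qed.

Lemma closeb_descent T j s : closeb (descent T j s) (descent T j.+1 s).
Proof.
case: T => [[a b] c]; rewrite /closeb /=.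
by apply/and3P; split; apply/Z.leb_le; case_zsign a; case_zsign b; case_zsign c; lia.
Qed.

Lemma descent_neq T j s : descent T j s <> descent T j.+1 s.
Proof. by case: T => [[a b] c]; rewrite /descent /= => -[]; case_zsign a; lia. Qed.

Lemma descent_inj T j s j' s' : (s <= j)%N -> (s' <= j')%N ->
  descent T j s = descent T j' s' -> j = j' /\ s = s'.
Proof.
case: T => [[a b] c]; rewrite /descent /= => hs hs' [e1 e2 _].
by move: e1 e2; case_zsign a; case_zsign b; lia.
Qed.

Section Octahedron.
Variable n : nat.
Implicit Types u v w : V n.

Definition coords v : Z3 := (Defs.c1 (val v), Defs.c2 (val v), Defs.c3 (val v)).

Lemma coord_inj : injective (@Defs.coord n).
Proof. by move=> i j; rewrite /Defs.coord => h; apply: val_inj => /=; lia. Qed.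

Lemma coords_inj : injective coords.
Proof.
move=> [[[x1 x2] x3] hv] [[[y1 y2] y3] hw]; rewrite /coords /Defs.c1 /Defs.c2 /Defs.c3 /=.
by case=> /coord_inj e1 /coord_inj e2 /coord_inj e3; subst; apply: val_inj.
Qed.

Lemma norm1_coords v : norm1 (coords v) = Z.of_nat n.
Proof. by have /Z.eqb_eq := valP v. Qed.

Lemma adj_coords v w : adj v w = (v != w) && closeb (coords v) (coords w).
Proof. by []. Qed.

Lemma coord_range_gt0 : (0 < 2 * n + 1)%N.
Proof. by rewrite addn1. Qed.

(* The index of the coordinate [z] in ['I_(2n+1)]; meaningful for [|z| <= n]. *)
Definition index_of (z : Z) : 'I_(2 * n + 1) :=
  Ordinal (ltn_pmod (Z.to_nat (z + Z.of_nat n)) coord_range_gt0).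

Lemma coord_index_of z : - Z.of_nat n <= z <= Z.of_nat n -> Defs.coord (index_of z) = z.
Proof. by move=> hz; rewrite /Defs.coord /index_of /= modn_small; lia. Qed.

(* The vertex with coordinates [T], if [T] lies on the octahedron; [u] otherwise. *)
Definition vertex_at (u : V n) (T : Z3) : V n :=
  insubd u (index_of T.1.1, index_of T.1.2, index_of T.2).

Lemma coords_vertex_at u T : norm1 T = Z.of_nat n -> coords (vertex_at u T) = T.
Proof.
case: T => [[x y] z]; rewrite /norm1 /= => h.
have hon : onOct (index_of x, index_of y, index_of z).
  by apply/Z.eqb_eq; rewrite /Defs.c1 /Defs.c2 /Defs.c3 /= !coord_index_of; lia.
by rewrite /coords /vertex_at /= insubdK //= /Defs.c1 /Defs.c2 /Defs.c3 /= !coord_index_of //; lia.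
Qed.

Lemma vertex_at_coords u v : vertex_at u (coords v) = v.
Proof. by apply: coords_inj; rewrite coords_vertex_at // norm1_coords. Qed.

Lemma adj_vertex_at u T T' : norm1 T = Z.of_nat n -> norm1 T' = Z.of_nat n ->
  T <> T' -> closeb T T' -> adj (vertex_at u T) (vertex_at u T').
Proof.
move=> h h' neqTT' cTT'; rewrite adj_coords !coords_vertex_at // cTT' andbT.
by apply/eqP => e; apply: neqTT'; rewrite -(coords_vertex_at u h) -(coords_vertex_at u h') e.
Qed.

(* A neighbour is determined by its coordinate offsets, each in {-1, 0, 1}. *)
Lemma card_adj_le v : (#|[set w | adj v w]| <= 27)%N.
Proof.
pose offset (z : Z) : 'I_3 := Ordinal (ltn_pmod (Z.to_nat (z + 1)) (isT : (0 < 3)%N)).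
pose phi w := (offset (Defs.c1 (val w) - Defs.c1 (val v)),
               offset (Defs.c2 (val w) - Defs.c2 (val v)),
               offset (Defs.c3 (val w) - Defs.c3 (val v))).
have phi_inj : {in [set w | adj v w] &, injective phi}.
  move=> w w'; rewrite !inE !adj_coords /closeb /coords /=.
  move=> /and4P [_ /Z.leb_le h1 /Z.leb_le h2 /Z.leb_le h3].
  move=> /and4P [_ /Z.leb_le h1' /Z.leb_le h2' /Z.leb_le h3'].
  case; rewrite !modn_small; try lia.
  by move=> e1 e2 e3; apply: coords_inj; rewrite /coords /=; congr (_, _, _); lia.
rewrite -(card_in_imset phi_inj); apply: leq_trans (max_card _) _.
by rewrite !card_prod !card_ord.
Qed.

(* A vertex is determined by its first two coordinates and the sign of the third. *)
Lemma card_V_le : (#|V n| <= (2 * n + 1) * (2 * n + 1) * 2)%N.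
Proof.
pose psi v := ((val v).1.1, (val v).1.2, 0 <=? Defs.c3 (val v)).
have psi_inj : injective psi.
  move=> v w [e1 e2 e3]; apply: coords_inj.
  move: (norm1_coords v) (norm1_coords w) e3; rewrite /coords /norm1 /Defs.c1 /Defs.c2 /= e1 e2.
  move=> nv nw {}e3; congr (_, _, _); move: e3 nv nw.
  by do 2 case: Z.leb_spec; lia.
by apply: leq_trans (leq_card _ psi_inj) _; rewrite !card_prod !card_ord card_bool.
Qed.

End Octahedron.

Section Distance.
Variable n : nat.
Implicit Types u v w : V n.

Lemma mem_ball_adj u k v w : v \in ball u k -> adj v w -> w \in ball u k.+1.
Proof.
by move=> hv hvw; rewrite /= !inE; apply/orP; right; apply/existsP; exists v; rewrite hv.
Qed.

Lemma dist_le u w k : w \in ball u k -> (Defs.dist u w <= k)%N.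
Proof.
move=> hw; rewrite /Defs.dist; case: (ltnP k #|V n|) => hk.
  rewrite leqNgt; apply/negP => /(before_find 0%N).
  by rewrite nth_iota // add0n hw.
by apply: leq_trans (find_size _ _) _; rewrite size_iota.
Qed.

Lemma dist_gt0 u w : w != u -> (0 < Defs.dist u w)%N.
Proof.
move=> wu; rewrite lt0n; apply: contraNneq wu; rewrite /Defs.dist => d0.
have V_gt0 : (0 < #|V n|)%N by apply/card_gt0P; exists u.
have hw : has (fun k => w \in ball u k) (iota 0 #|V n|) by rewrite has_find d0 size_iota.
by have := nth_find 0%N hw; rewrite d0 nth_iota // inE.
Qed.

End Distance.

Section Descent.
Variables (n : nat) (u : V n) (k : nat).
Hypothesis k_le3 : (k <= 3)%N.

(* Rotating coordinates [k] times brings the coordinate along which we descend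
   into first position; rotating [3 - k] more times undoes this. *)
Definition descent_start : Z3 := iter k rotZ3 (coords u).

Definition descent_len : nat := Z.to_nat (Z.abs descent_start.1.1).

Definition descent_vertex (j s : nat) : V n :=
  vertex_at u (iter (3 - k) rotZ3 (descent descent_start j s)).

Lemma norm1_descent_vertex j s : (j <= descent_len)%N ->
  norm1 (iter (3 - k) rotZ3 (descent descent_start j s)) = Z.of_nat n.
Proof.
move=> hj; rewrite norm1_rotZ3 norm1_descent; last by rewrite /descent_len in hj; lia.
by rewrite norm1_rotZ3 norm1_coords.
Qed.

Lemma coords_descent_vertex j s : (j <= descent_len)%N ->
  coords (descent_vertex j s) = iter (3 - k) rotZ3 (descent descent_start j s).
Proof. by move=> hj; rewrite coords_vertex_at // norm1_descent_vertex. Qed.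

Lemma descent_vertex0 s : descent_vertex 0 s = u.
Proof. by rewrite /descent_vertex descent0 rotZ3K // vertex_at_coords. Qed.

Lemma descent_vertex_ball j s : (j <= descent_len)%N -> descent_vertex j s \in ball u j.
Proof.
elim: j => [_|j IH hj]; first by rewrite descent_vertex0 inE.
apply: mem_ball_adj (IH (ltnW hj)) _; apply: adj_vertex_at.
- exact: norm1_descent_vertex (ltnW hj).
- exact: norm1_descent_vertex hj.
- by move/rotZ3_inj; apply: descent_neq.
- by rewrite closeb_rotZ3 closeb_descent.
Qed.

Lemma descent_vertex_inj j s j' s' : (j <= descent_len)%N -> (j' <= descent_len)%N ->
  (s <= j)%N -> (s' <= j')%N -> descent_vertex j s = descent_vertex j' s' -> j = j' /\ s = s'.
Proof.
move=> hj hj' hs hs' /(congr1 (@coords n)).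
by rewrite !coords_descent_vertex // => /rotZ3_inj; apply: descent_inj.
Qed.

Lemma descent_vertex_neq j s : (0 < j <= descent_len)%N -> (s <= j)%N -> descent_vertex j s != u.
Proof.
case/andP=> j_gt0 hj hs; apply/eqP; rewrite -(descent_vertex0 0) => /descent_vertex_inj.
by case/(_ hj (leq0n _) hs (leqnn 0)) => j0; rewrite j0 in j_gt0.
Qed.

End Descent.

Lemma exists_long_descent n (u : V n) : exists2 k, (k <= 3)%N & (n <= 3 * descent_len u k)%N.
Proof.
have := norm1_coords u; rewrite /descent_len /descent_start.
case: (coords u) => [[a b] c]; rewrite /norm1 /= => h.
have [ha|ha] := boolP (n <= 3 * Z.to_nat (Z.abs a))%N; first by exists 0%N.
have [hb|hb] := boolP (n <= 3 * Z.to_nat (Z.abs b))%N; first by exists 1%N.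
by exists 2%N => //=; lia.
Qed.

Local Close Scope Z_scope.

Section Choice.
Variable n : nat.
Implicit Types u v w : V n.

Definition invZn u : R := \sum_(w | w != u) ((Defs.dist u w)%:R ^+ 2)^-1.

Lemma ZnE u : Zn u = (invZn u)^-1.
Proof.
by rewrite /Zn /invZn RinvE; congr _^-1; apply: eq_bigr => w _; rewrite RinvE INRE RpowE.
Qed.

Lemma pchooseE u v :
  pchoose u v = if v == u then 0 else Zn u * ((Defs.dist u v)%:R ^+ 2)^-1.
Proof. by rewrite /pchoose INRE RpowE RinvE RmultE. Qed.

Lemma invZn_ge0 u : 0 <= invZn u.
Proof. by apply: sumr_ge0 => w _; rewrite invr_ge0 sqr_ge0. Qed.

Lemma Zn_ge0 u : 0 <= Zn u.
Proof. by rewrite ZnE invr_ge0 invZn_ge0. Qed.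

Lemma pchoose_ge0 u v : 0 <= pchoose u v.
Proof.
by rewrite pchooseE; case: eqP => // _; rewrite mulr_ge0 ?Zn_ge0 ?invr_ge0 ?sqr_ge0.
Qed.

Lemma pchoose_le_Zn u v : pchoose u v <= Zn u.
Proof.
rewrite pchooseE; case: eqP => [_|/eqP vu]; first exact: Zn_ge0.
by rewrite ler_piMr ?Zn_ge0 // invf_le1 -natrX ?ler1n ?ltr0n expn_gt0 dist_gt0.
Qed.

Lemma sum_pchoose_le1 u : \sum_v pchoose u v <= 1.
Proof.
have -> : \sum_v pchoose u v = Zn u * invZn u.
  rewrite /invZn mulr_sumr (bigID (fun v => v == u)) /= big1 ?add0r.
    by apply: eq_bigr => v vu; rewrite pchooseE (negbTE vu).
  by move=> v vu; rewrite pchooseE vu.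
by rewrite ZnE; have [->|/mulVf ->] := eqVneq (invZn u) 0; rewrite ?invr0 ?mul0r.
Qed.

Lemma sum_pchoose_ge0 u (S : pred (V n)) : 0 <= \sum_(v | S v) pchoose u v.
Proof. by apply: sumr_ge0 => v _; apply: pchoose_ge0. Qed.

Lemma sum_pchoose_pred_le1 u (S : pred (V n)) : \sum_(v | S v) pchoose u v <= 1.
Proof.
by apply: le_trans (sum_pchoose_le1 u); rewrite [leRHS](bigID S) /= lerDl sum_pchoose_ge0.
Qed.

(* The descent vertices [descent_vertex u k r.+1 s], [s <= r.+1], are [r + 2]
   distinct vertices at distance at most [r + 1] from [u]. *)
Lemma harmonic_le_invZn u k : (k <= 3)%N ->
  \sum_(r < descent_len u k) (r.+1%:R)^-1 <= invZn u.
Proof.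
move=> k_le3; set m := descent_len u k.
pose D := [set rs : 'I_m * 'I_m.+1 | (rs.2 < rs.1.+2)%N].
pose phi (rs : 'I_m * 'I_m.+1) := descent_vertex u k rs.1.+1 rs.2.
pose g w : R := ((Defs.dist u w)%:R ^+ 2)^-1.
have phi_inj : {in D &, injective phi}.
  move=> [i j] [i' j']; rewrite !inE /= => hj hj'.
  by case/descent_vertex_inj => //=; rewrite ?ltn_ord // => /succn_inj/val_inj-> /val_inj->.
have phi_neq rs : rs \in D -> phi rs != u.
  by rewrite inE => hs; apply: descent_vertex_neq => //=.
have g_ge0 w : 0 <= g w by rewrite invr_ge0 sqr_ge0.
apply: le_trans (sum_inj_le phi_inj phi_neq g_ge0).
rewrite (eq_bigl (fun rs : 'I_m * 'I_m.+1 => true && (rs.2 < rs.1.+2)%N)); last first.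
  by move=> rs; rewrite inE.
rewrite -(pair_big_dep xpredT (fun (i : 'I_m) (j : 'I_m.+1) => (j < i.+2)%N)
            (fun i j => g (phi (i, j)))) /=.
apply: ler_sum => i _; apply: le_trans (invn_le_sqr_muln _ i) _.
have g_phi (j : 'I_m.+1) : (j < i.+2)%N -> (i.+1%:R ^+ 2)^-1 <= g (phi (i, j)).
  move=> hj; have phi_ij : (i, j) \in D by rewrite inE.
  rewrite /g lef_pV2 ?posrE ?exprn_gt0 ?ltr0n ?dist_gt0 ?phi_neq // -!natrX ler_nat leq_exp2r //.
  by apply: dist_le; apply: descent_vertex_ball.
apply: le_trans (ler_sum _ g_phi); rewrite -(big_ord_widen _ (fun=> (i.+1%:R ^+ 2)^-1)) ?ltnS //.
by rewrite -(big_mkord xpredT (fun=> (i.+1%:R ^+ 2)^-1)) sumr_const_nat subn0.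
Qed.

End Choice.

(* [ln (m + 1) >= ln n - ln 3 >= ln n / 2] once [n >= 9], where [n <= 3 m]. *)
Lemma Zn_le_inv_ln n (u : V n) : (9 <= n)%N -> Zn u <= 2 / ln n%:R.
Proof.
move=> n_ge9; have [k k_le3 n_le] := exists_long_descent u.
set m := descent_len u k in n_le.
have ln3_gt0 : 0 < ln 3%:R by apply: ln_nat_gt0.
have ln_n_le : ln n%:R <= ln 3%:R + ln m.+1%:R by rewrite -ln_natM ?ler_ln_nat //; lia.
have ln9_le : ln 3%:R + ln 3%:R <= ln n%:R by rewrite -ln_natM ?ler_ln_nat.
have := le_trans (ln_le_harmonic m) (harmonic_le_invZn u k_le3).
by move=> ln_m_le; rewrite ZnE -invf_div lef_pV2 ?posrE; lra.
Qed.

Section Triangles.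
Variable n : nat.
Implicit Types (u v w x y z : V n) (f : {ffun V n -> V n}).

Definition rot_triple (t : V n * V n * V n) : V n * V n * V n :=
  let: (x, y, z) := t in (y, z, x).

Lemma rot_triple_inj : injective rot_triple.
Proof. by move=> [[x y] z] [[x' y'] z'] [-> -> ->]. Qed.

(* The choices realising the 3-cycle [x -> y -> z -> x] whose edge [x -> y] is
   long-range: [x] chooses [y], and [y] (resp. [z]) chooses [z] (resp. [x]) unless
   that pair is already an edge of the octahedral graph. *)
Definition cycle_choices x y z u : pred (V n) :=
  if u == x then pred1 y
  else if u == y then [pred v | adj y z || (v == z)]
  else if u == z then [pred v | adj z x || (v == x)]
  else predT.

Definition rooted_C3 f (t : V n * V n * V n) : bool :=
  let: (x, y, z) := t in [&& x != y, y != z, z != x & f \in family (cycle_choices x y z)].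

Lemma rooted_C3E f x y z : [&& x != y, y != z & z != x] ->
  rooted_C3 f (x, y, z) = [&& f x == y, adj y z || (f y == z) & adj z x || (f z == x)].
Proof.
case/and3P=> xy yz zx; rewrite /rooted_C3 xy yz zx /=.
have [yx zx' zy] : [/\ y == x = false, z == x = false & z == y = false].
  by rewrite eq_sym (negbTE xy) (negbTE zx) eq_sym (negbTE yz).
apply/familyP/and3P => [f_in|[fx fy fz] u].
  by split; [have := f_in x | have := f_in y | have := f_in z];
    rewrite /cycle_choices ?eqxx ?yx ?zx' ?zy /= ?inE.
rewrite /cycle_choices; case: eqP => [->|_]; first by rewrite inE.
by case: eqP => [->|_] //; case: eqP => [->|_].
Qed.

Lemma C3w_rooted f t : C3w f t ->
  [|| rooted_C3 f t, rooted_C3 f (rot_triple t) | rooted_C3 f (rot_triple (rot_triple t))].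
Proof.
case: t => [[x y] z]; rewrite /C3w /type_s /type_w.
case/and4P => xy yz zx /and4P [exy eyz ezx some_w].
have edge u v : adj u v || (1 < Defs.dist u v)%N && (f u == v) -> adj u v || (f u == v).
  by case/orP => [->|/andP [_ ->]]; rewrite ?orbT.
have [yx zy xz] : [/\ y != x, z != y & x != z] by split; rewrite eq_sym.
rewrite /rot_triple !rooted_C3E ?xy ?yz ?zx ?yx ?zy ?xz //.
rewrite (edge _ _ exy) (edge _ _ eyz) (edge _ _ ezx).
by case/or3P: some_w => /andP [_ ->]; rewrite ?orbT.
Qed.

Lemma card_C3w_le f : (#|[set t | C3w f t]| <= 3 * #|[set t | rooted_C3 f t]|)%N.
Proof.
set Rt := [set t | rooted_C3 f t].
have sub : [set t | C3w f t] \subset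
           Rt :|: rot_triple @^-1: Rt :|: (rot_triple \o rot_triple) @^-1: Rt.
  by apply/subsetP => t; rewrite !inE -orbA => /C3w_rooted.
apply: leq_trans (subset_leq_card sub) _; apply: leq_trans (leq_card_setU _ _).1 _.
apply: leq_trans (leq_add (leq_card_setU _ _).1 (leqnn _)) _.
have rot2_inj : injective (rot_triple \o rot_triple) by apply: inj_comp; apply: rot_triple_inj.
by rewrite !card_preimset //; first lia; apply: rot_triple_inj.
Qed.

Lemma probfE f : probf f = \prod_u pchoose u (f u).
Proof. by []. Qed.

Lemma probf_ge0 f : 0 <= probf f.
Proof. by rewrite probfE; apply: prodr_ge0 => u _; apply: pchoose_ge0. Qed.

Lemma sum_pchoose_orb_le u (b : bool) v :
  \sum_(w | b || (w == v)) pchoose u w <= b%:R + pchoose u v.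
Proof.
case: b => /=; last by rewrite add0r big_pred1_eq.
by apply: le_trans (sum_pchoose_le1 u) _; rewrite lerDl pchoose_ge0.
Qed.

Definition link_weight y z := (adj y z)%:R + pchoose y z.

Definition cycle_weight x y z := pchoose x y * link_weight y z * link_weight z x.

Lemma prob_rooted_C3_le x y z : \sum_(f | rooted_C3 f (x, y, z)) probf f <= cycle_weight x y z.
Proof.
have [/and3P [xy yz zx]|not_distinct] := boolP [&& x != y, y != z & z != x]; last first.
  rewrite big_pred0 /link_weight ?mulr_ge0 ?addr_ge0 ?pchoose_ge0 ?ler0n // => f.
  by apply: contraNF not_distinct => /and4P [-> -> ->].
rewrite (eq_bigl (mem (family (cycle_choices x y z)))); last by move=> f; rewrite /= xy yz zx.
under eq_bigr do rewrite probfE.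
have cx : cycle_choices x y z x = pred1 y by rewrite /cycle_choices eqxx.
have cy : cycle_choices x y z y = [pred v | adj y z || (v == z)].
  by rewrite /cycle_choices eq_sym (negbTE xy) eqxx.
have cz : cycle_choices x y z z = [pred v | adj z x || (v == x)].
  by rewrite /cycle_choices (negbTE zx) eq_sym (negbTE yz) eqxx.
rewrite -bigA_distr_big_dep (prodD3 _ xy yz zx) cx cy cz big_pred1_eq !mulrA -[leRHS]mulr1.
have rest_le1 : \prod_(u | [&& u != x, u != y & u != z])
                   \sum_(v | cycle_choices x y z u v) pchoose u v <= 1.
  by apply: prodr_ile1 => u _; rewrite sum_pchoose_ge0 sum_pchoose_pred_le1.
apply: ler_pM rest_le1; rewrite ?mulr_ge0 ?pchoose_ge0 ?sum_pchoose_ge0 //.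
  by apply: prodr_ge0 => u _; apply: sum_pchoose_ge0.
apply: ler_pM; rewrite ?mulr_ge0 ?pchoose_ge0 ?sum_pchoose_ge0 ?sum_pchoose_orb_le //.
by rewrite ler_wpM2l ?pchoose_ge0 ?sum_pchoose_orb_le.
Qed.

Lemma sum_triple (F : V n * V n * V n -> R) : \sum_t F t = \sum_x \sum_y \sum_z F (x, y, z).
Proof.
rewrite (pair_big _ _ (fun x y => \sum_z F (x, y, z))) /=.
by rewrite (pair_big _ _ (fun xy z => F (xy.1, xy.2, z))); apply: eq_bigr => -[[]].
Qed.

(* Each C3 with a long-range edge is counted [3] times in [#|[set t | C3w f t]|] and
   rooted at one of its long-range edges at least once. *)
Lemma numC3w_le f : numC3w f <= \sum_t (rooted_C3 f t)%:R.
Proof.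
have -> : \sum_t (rooted_C3 f t)%:R = #|[set t | rooted_C3 f t]|%:R :> R.
  rewrite -sum1_card natr_sum [RHS]big_mkcond; apply: eq_bigr => t _.
  by rewrite inE; case: rooted_C3.
rewrite /numC3w RdivE IZRposE !INRE /= ler_pdivrMr ?ltr0n // -natrM ler_nat (mulnC _ 3).
exact: card_C3w_le.
Qed.

Lemma expC3w_le_sum_weight : expC3w n <= \sum_x \sum_y \sum_z cycle_weight x y z.
Proof.
apply: le_trans (_ : \sum_f probf f * \sum_t (rooted_C3 f t)%:R <= _).
  by apply: ler_sum => f _; rewrite ler_wpM2l ?probf_ge0 ?numC3w_le.
under eq_bigr do rewrite mulr_sumr.
rewrite exchange_big sum_triple; apply: ler_sum => x _; apply: ler_sum => y _.
apply: ler_sum => z _; apply: le_trans (prob_rooted_C3_le x y z).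
by rewrite [leRHS]big_mkcond; apply: ler_sum => f _; case: rooted_C3; rewrite ?mulr1 ?mulr0.
Qed.

Lemma sum_adj_le y : \sum_z (adj y z)%:R <= 27 :> R.
Proof.
rewrite -natr_sum ler_nat; apply: leq_trans (card_adj_le y).
by rewrite -sum1_card [X in (_ <= X)%N]big_mkcond; apply: leq_sum => z _; rewrite inE; case: adj.
Qed.

(* In [cycle_weight x y z] bound [pchoose x y] by [c] against [adj z x] and
   [pchoose z x] by [c]; both resulting triple sums are chain sums. *)
Lemma sum_cycle_weight_le (c : R) : 0 <= c -> (forall u v, pchoose u v <= c) ->
  \sum_x \sum_y \sum_z cycle_weight x y z <= 784 * c * #|V n|%:R.
Proof.
move=> c_ge0 pchoose_le.
have adj_ge0 y z : 0 <= (adj y z)%:R :> R by apply: ler0n.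
have link_ge0 y z : 0 <= link_weight y z by rewrite addr_ge0 ?pchoose_ge0.
have sum_link_le y : \sum_z link_weight y z <= 28.
  by rewrite big_split /= -[28]/(27 + 1)%:R natrD lerD ?sum_adj_le ?sum_pchoose_le1.
have weight_le x y z : cycle_weight x y z <=
    c * (link_weight y z * (adj z x)%:R) + c * (pchoose x y * link_weight y z).
  rewrite /cycle_weight {3}/link_weight mulrDr; apply: lerD.
    by rewrite -mulrA ler_wpM2r ?mulr_ge0.
  by rewrite mulrC ler_wpM2r ?mulr_ge0 ?pchoose_ge0.
have chain_adj : \sum_x \sum_y \sum_z link_weight y z * (adj z x)%:R <= 28 * 27 * #|V n|%:R.
  rewrite exchange_big /=; under eq_bigr do rewrite exchange_big /=.
  by apply: sum_chain_le link_ge0 sum_link_le adj_ge0 sum_adj_le _.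
have chain_choice : \sum_x \sum_y \sum_z pchoose x y * link_weight y z <= 1 * 28 * #|V n|%:R.
  by apply: sum_chain_le (@pchoose_ge0 n) (@sum_pchoose_le1 n) link_ge0 sum_link_le _.
apply: le_trans (_ : c * (\sum_x \sum_y \sum_z link_weight y z * (adj z x)%:R)
                  + c * (\sum_x \sum_y \sum_z pchoose x y * link_weight y z) <= _).
  by do 3 (rewrite !mulr_sumr -big_split; apply: ler_sum => ? _); apply: weight_le.
have -> : 784 * c * #|V n|%:R = c * (28 * 27 * #|V n|%:R) + c * (1 * 28 * #|V n|%:R) by ring.
by rewrite lerD // ler_wpM2l.
Qed.
End Triangles.

Theorem theorem4 :
  exists (C : R) (N : nat), Rlt 0 C /\
    forall n : nat, leq N n ->
      Rle (expC3w n) (Rmult C (Rdiv (pow (INR n) 2) (ln (INR n)))).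
Proof.
exists (784 * 2 * 18), 9%N; split; first by apply/RltP; rewrite !mulr_gt0 ?ltr0n.
move=> n n_ge9; apply/RleP; rewrite RmultE RdivE RpowE INRE.
have ln_gt0 : 0 < ln n%:R by apply: ln_nat_gt0; lia.
set c := 2 / ln n%:R.
have c_ge0 : 0 <= c by rewrite divr_ge0 // ltW.
have pchoose_le u v : pchoose u v <= c := le_trans (pchoose_le_Zn u v) (Zn_le_inv_ln u n_ge9).
have card_le : #|V n|%:R <= 18 * n%:R ^+ 2 :> R.
  by rewrite -natrX -natrM ler_nat; apply: leq_trans (card_V_le n) _; nia.
apply: le_trans (expC3w_le_sum_weight n) _.
apply: le_trans (sum_cycle_weight_le c_ge0 pchoose_le) _.
apply: le_trans (ler_wpM2l _ card_le) _; first by rewrite mulr_ge0.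
suff -> : 784 * c * (18 * n%:R ^+ 2) = 784 * 2 * 18 * (n%:R ^+ 2 / ln n%:R) by [].
by rewrite /c; field; rewrite gt_eqF.
Qed.
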